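(* Fix $\kappa_r>0$. For $\lambda_r\in\mathbb{R}$, let $\gamma_r$ be a random variable on $(0,\infty)$ with density proportional to $\gamma^{-1/2}\exp\!\left(-\frac{\lambda_r^2+\kappa_r\gamma^2}{2\gamma}\right)$, and let $\kappa'_r$ be a random variable on $(0,\infty)$ with density proportional to $\kappa\exp\!\left(-\frac{\mathbb{E}[\gamma_r]\,\kappa}{2}\right)$ (a Gamma distribution with shape $2$ and rate $\mathbb{E}[\gamma_r]/2$). Then there exists a decreasing function $\rho:[0,\infty)\to(0,\infty)$, depending only on $\kappa_r$, such that $\mathbb{E}[\kappa'_r] = \rho(|\lambda_r|)$ for every $\lambda_r\in\mathbb{R}$.
   Context: In the paper's Gibbs sampler, $\kappa_r$ is resampled from $\mathrm{Gamma}(\text{shape }2,\text{ rate }\gamma_r/2)$, and the theorem concerns this update with $\gamma_r$ replaced by its conditional expectation given $\lambda_r$ and the current value of $\kappa_r$. *)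

From HB Require Import structures.
From mathcomp Require Import all_boot all_order all_algebra.
From mathcomp Require Import all_classical all_reals all_analysis.
Set Implicit Arguments. Unset Strict Implicit. Unset Printing Implicit Defensive.
Import Order.TTheory GRing.Theory Num.Theory.
Local Open Scope ring_scope.
Local Open Scope classical_set_scope.

(* Mean of the probability distribution on (0, +oo) whose density is
   proportional to the (nonnegative, integrable) function f:
   (int_0^oo x f(x) dx) / (int_0^oo f(x) dx), Lebesgue integrals. *)
Definition mean_prop_density (R : realType) (f : R -> R) : R :=
  Rintegral (@lebesgue_measure R) [set x : R | 0 < x] (fun x => x * f x) /
  Rintegral (@lebesgue_measure R) [set x : R | 0 < x] f.

Definition gamma_dens (R : realType) (kappa lam : R) (g : R) : R :=
  powR g (- (1 / 2)) * expR (- ((lam ^+ 2 + kappa * g ^+ 2) / (2 * g))).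

Definition mean_gamma (R : realType) (kappa lam : R) : R :=
  mean_prop_density (gamma_dens kappa lam).

Definition kappa_dens (R : realType) (Eg : R) (k : R) : R :=
  k * expR (- (Eg * k / 2)).

Definition mean_kappa_new (R : realType) (kappa lam : R) : R :=
  mean_prop_density (kappa_dens (mean_gamma kappa lam)).

From HB Require Import structures.
From mathcomp Require Import all_boot all_order all_algebra.
From mathcomp Require Import all_classical all_reals all_analysis.
From mathcomp Require Import ring lra measurable_realfun.
Import Order.TTheory GRing.Theory Num.Theory.
Import numFieldTopology.Exports numFieldNormedType.Exports.
Set Implicit Arguments. Unset Strict Implicit. Unset Printing Implicit Defensive.
Local Open Scope ring_scope.

(* If g = h f on (0, +oo) with h increasing, then the mean of g exceeds the
   mean m of f: the integral of (x - m) (h x - h m) f x is positive and equals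
   E_g[x] - m up to the positive factor int g. For |lambda| = y > x the density
   of gamma_r is the one for |lambda| = x tilted by exp(-(y^2 - x^2)/(2 gamma)),
   which increases with gamma, so E[gamma_r] increases with |lambda|. The
   Gamma(2, c/2) density is the Gamma(2, c'/2) density tilted by
   exp((c' - c) kappa / 2), so E[kappa'_r] decreases as E[gamma_r] grows. All
   densities involved are bounded by a multiple of gamma^(a-1) near 0 and decay
   exponentially at infinity, which gives the integrability needed. As the
   density of gamma_r depends on lambda only through lambda^2, rho t can be
   taken to be E[kappa'_r] at lambda = t. *)

Lemma integrable_setU d (T : measurableType d) (R : realType)
    (mu : {measure set T -> \bar R}) (A B : set T) (f : T -> \bar R) :
  measurable A -> measurable B -> [disjoint A & B]%classic ->
  mu.-integrable A f -> mu.-integrable B f -> mu.-integrable (A `|` B) f.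
Proof.
move=> mA mB AB /integrableP[mfA fA] /integrableP[mfB fB].
have mfU : measurable_fun (A `|` B) f by apply/measurable_funU.
apply/integrableP; split => //.
rewrite ge0_integral_setU //; first exact: lte_add_pinfty.
exact: measurableT_comp mfU.
Qed.

Section PositiveHalfLine.
Local Open Scope classical_set_scope.
Context {R : realType}.
Local Notation mu := (@lebesgue_measure R).
Local Notation RT := (measurableTypeR R).
Local Notation pos := (`]0, +oo[%classic : set RT).
Local Notation integrable f := (mu.-integrable pos (EFin \o f)).

Lemma mul_expRN_le (r x : R) : 0 < r ->
  x * expR (- (r * x)) <= (r / 2)^-1 * expR (- (r / 2 * x)).
Proof.
move=> r0; have r20 : 0 < r / 2 by rewrite divr_gt0.
have x_le : x <= (r / 2)^-1 * expR (r / 2 * x).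
  rewrite -(ler_pM2l r20) mulrA mulfV ?gt_eqF// mul1r.
  have := expR_ge1Dx (r / 2 * x); lra.
have -> : expR (- (r / 2 * x)) = expR (r / 2 * x) * expR (- (r * x)).
  by rewrite -expRD; congr expR; field.
by rewrite mulrA ler_wpM2r ?expR_ge0.
Qed.

Lemma continuous_expR_comp (s : R -> R) (x : R) :
  {for x, continuous s} -> {for x, continuous (fun y => expR (s y))}.
Proof. by move=> cs; apply: (continuous_comp cs); exact: continuous_expR. Qed.

Lemma continuous_powRl (p a : R) : 0 < a -> {for a, continuous (fun y : R => powR y p)}.
Proof.
move=> a0; apply/differentiable_continuous/derivable1_diffP.
by apply: derivable_powR; rewrite in_itv/= andbT.
Qed.

Lemma measurable_fun_continuous_gt0 (A : set RT) (f : R -> R) :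
  measurable A -> A `<=` `]0, +oo[ -> (forall x, 0 < x -> {for x, continuous f}) ->
  measurable_fun A f.
Proof.
move=> mA A0 cf; apply: measurable_funS A0 _ => //.
apply: open_continuous_measurable_fun; first exact: interval_open.
by move=> x; rewrite inE/= in_itv/= andbT; exact: cf.
Qed.

Lemma integrable_expRN_dominated (A : set RT) (f : R -> R) (M r : R) :
  measurable A -> A `<=` `[0, +oo[ -> 0 < r -> measurable_fun A f ->
  (forall x, A x -> `|f x| <= M * expR (- (r * x))) ->
  mu.-integrable A (EFin \o f).
Proof.
move=> mA A0 r0 mf fle.
have iexp : mu.-integrable A (EFin \o exponential_pdf r).
  exact: integrableS (integrable_exponential_pdf r0).
apply: le_integrable (integrableZl mA (M / r) iexp) => //[|x Ax].
  exact/measurable_EFinP.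
rewrite /= lee_fin /exponential_pdf patchE mem_set; last exact: A0.
have -> : M / r * (r * expR (- r * x)) = M * expR (- (r * x)).
  by rewrite mulNr; field; rewrite gt_eqF.
exact/(le_trans (fle x Ax))/ler_norm.
Qed.

Lemma integral_itv_powR_le1 (a b : R) : 0 < a -> 0 < b < 1 ->
  (\int[mu]_(x in (`[b, 1%R] : set RT)) (a * powR x (a - 1))%:E <= 1)%E.
Proof.
move=> a0 /andP[b0 b1].
have cpow p x : b <= x -> {for x, continuous (fun y : R => powR y p)}.
  by move=> bx; apply/continuous_powRl/(lt_le_trans b0).
have cf x : b <= x -> {for x, continuous (fun y : R => a * powR y (a - 1))}.
  by move=> bx; apply: continuousM; [exact: cst_continuous | exact: cpow].
rewrite (@continuous_FTC2 _ _ (fun y => powR y a)) //.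
- by rewrite powR1 lee_fin lerBlDr lerDl powR_ge0.
- apply: continuous_in_subspaceT => x; rewrite inE/= in_itv/= => /andP[bx _].
  exact: cf.
- split.
  + move=> x; rewrite in_itv/= => /andP[bx _].
    by apply: derivable_powR; rewrite in_itv/= andbT (lt_trans b0).
  + exact/cvg_at_right_filter/cpow.
  + exact/cvg_at_left_filter/cpow/ltW.
- move=> x; rewrite in_itv/= => /andP[bx _].
  by rewrite powR_derive1 // in_itv/= andbT (lt_trans b0).
Qed.

Lemma integrable_powR_oc01 (a : R) : 0 < a ->
  mu.-integrable (`]0, 1] : set RT) (EFin \o (fun x => powR x (a - 1))).
Proof.
move=> a0; pose f x := a * powR x (a - 1).
suff fi : mu.-integrable (`]0, 1] : set RT) (EFin \o f).
  apply: eq_integrable (integrableZl _ a^-1 fi) => // x _ /=.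
  by rewrite -EFinM /f mulrA mulVf ?gt_eqF ?mul1r.
have f_ge0 x : 0 <= f x by rewrite mulr_ge0 ?powR_ge0 // ltW.
have mf : measurable_fun (`]0, 1] : set RT) f.
  apply: measurable_fun_continuous_gt0 => [//|x|x x0].
    by rewrite /= !in_itv/= andbT => /andP[].
  by apply: continuousM; [exact: cst_continuous | exact: continuous_powRl].
apply/integrableP; split; first exact/measurable_EFinP.
pose F n : set RT := `[n.+2%:R^-1, 1].
have F_sub n : F n `<=` `]0, 1] by apply: subset_itv; rewrite bnd_simp.
have UF : \bigcup_n F n = `]0, 1].
  apply/seteqP; split=> [x [n _ /F_sub]//|x]; rewrite /= in_itv/= => /andP[x0 x1].
  have [n nx] := ltr_add_invr x0; rewrite add0r in nx.
  exists n => //; rewrite /F/= in_itv/= x1 andbT.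
  by apply: le_trans (ltW nx); rewrite lef_pV2 ?posrE// ler_nat leqW.
have ndF : {homo F : n m / (n <= m)%N >-> (n <= m)%O}.
  move=> n m nm; rewrite subsetEset; apply: subset_itv => //.
  by rewrite bnd_simp lef_pV2 ?posrE// ler_nat.
have mfF n : measurable_fun (F n) (EFin \o f).
  by apply/measurable_EFinP; apply: measurable_funS mf => //; exact: F_sub.
have cvgF := @ge0_nondecreasing_set_cvg_integral _ _ _ F _ mu ndF
  (fun n => measurable_itv _) mfF (fun n x _ => f_ge0 x).
under eq_integral do rewrite /comp abse_EFin ger0_norm//.
rewrite -UF -(cvg_lim _ cvgF) // (@le_lt_trans _ _ 1%E) ?ltry //.
apply: lime_le; first exact: cvgP cvgF.
apply: nearW => n; apply: integral_itv_powR_le1 => //.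
by rewrite invr_gt0 ltr0n invf_lt1 ?ltr1n.
Qed.

Lemma integrable_powR_dominated_oc01 (f : R -> R) (a M : R) : 0 < a ->
  measurable_fun (`]0, 1] : set RT) f ->
  (forall x, 0 < x <= 1 -> `|f x| <= M * powR x (a - 1)) ->
  mu.-integrable (`]0, 1] : set RT) (EFin \o f).
Proof.
move=> a0 mf f_le.
have m01 : measurable (`]0, 1] : set RT) by exact: measurable_itv.
apply: le_integrable (integrableZl m01 `|M| (integrable_powR_oc01 a0)) => //.
  exact/measurable_EFinP.
move=> x /=; rewrite in_itv/= => x01; rewrite lee_fin (le_trans (f_le _ x01)) //.
by rewrite normrM normr_id ger0_norm ?powR_ge0 // ler_wpM2r ?powR_ge0 ?ler_norm.
Qed.

Lemma Rintegral_gt0 (D : set RT) (f : R -> R) (a b : R) :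
  measurable D -> `[a, b] `<=` D -> a < b ->
  mu.-integrable D (EFin \o f) -> (forall x, D x -> 0 <= f x) ->
  (forall x, a <= x <= b -> {for x, continuous f}) ->
  (forall x, a <= x <= b -> 0 < f x) ->
  0 < \int[mu]_(x in D) f x.
Proof.
move=> mD abD ab fi f_ge0 cf f_gt0.
have mab : measurable (`[a, b] : set RT) by exact: measurable_itv.
have cf_ab : {within `[a, b], continuous f}.
  by apply: continuous_in_subspaceT => x; rewrite inE/= in_itv/= => /cf.
have [c cab fc_min] := EVT_min (ltW ab) cf_ab.
have fc0 : 0 < f c by apply: f_gt0; rewrite in_itv/= in cab.
rewrite -lte_fin /Rintegral fineK; last exact: integrable_fin_num.
apply: (@lt_le_trans _ _ ((f c * (b - a))%:E)).
  by rewrite lte_fin mulr_gt0 ?subr_gt0.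
have mf : measurable_fun D (EFin \o f) by case/integrableP: fi.
apply: (@le_trans _ _ (\int[mu]_(x in (`[a, b] : set RT)) (f x)%:E)%E).
  have mu_ab : mu (`[a, b] : set RT) = (b - a)%:E.
    by rewrite lebesgue_measure_itv/= lte_fin ab EFinB.
  rewrite EFinM -mu_ab -integral_cst //.
  apply: ge0_le_integral => //.
  - by move=> x _; rewrite lee_fin ltW.
  - exact: measurable_funS mf.
apply: (ge0_subset_integral _ mab mD) => // x Dx; rewrite lee_fin; exact: f_ge0.
Qed.

Lemma measurable_pos : measurable pos. Proof. exact: measurable_itv. Qed.

Lemma integrable_itv_gt0_split (f : R -> R) :
  mu.-integrable (`]0, 1] : set RT) (EFin \o f) ->
  mu.-integrable (`]1, +oo[ : set RT) (EFin \o f) -> integrable f.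
Proof.
have -> : pos = `]0, 1] `|` `]1, +oo[ by rewrite -itv_bndbnd_setU // bnd_simp.
apply: integrable_setU; [exact: measurable_itv | exact: measurable_itv |].
apply/disj_setPS => x [] /=; rewrite !in_itv/= andbT => /andP[_ x1] /lt_le_trans.
by move=> /(_ _ x1); rewrite ltxx.
Qed.

Lemma mean_prop_densityE (f : R -> R) : mean_prop_density f =
  (\int[mu]_(x in pos) (x * f x)) / \int[mu]_(x in pos) f x.
Proof.
rewrite /mean_prop_density; suff -> : [set x : R | 0 < x] = `]0, +oo[ by [].
by apply/seteqP; split => x /=; rewrite in_itv/= andbT.
Qed.

Definition regular_density (f : R -> R) :=
  [/\ forall x, 0 < x -> 0 < f x, forall x, 0 < x -> {for x, continuous f},
      integrable f & integrable (fun x => x * f x)].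

Lemma regular_density_bounded (f : R -> R) (a c M0 M1 : R) : 0 < a -> 0 < c ->
  (forall x, 0 < x -> 0 < f x) -> (forall x, 0 < x -> {for x, continuous f}) ->
  (forall x, 0 < x <= 1 -> f x <= M0 * powR x (a - 1)) ->
  (forall x, 1 < x -> f x <= M1 * expR (- (c * x))) ->
  regular_density f.
Proof.
move=> a0 c0 f_gt0 cf f01 f1oo.
have f_ge0 x : 0 < x -> 0 <= f x by move/f_gt0/ltW.
have cxf x : 0 < x -> {for x, continuous (fun y : R => y * f y)}.
  by move=> x0; apply: continuousM; [exact: cvg_id | exact: cf].
have sub01 : (`]0, 1] : set RT) `<=` `]0, +oo[.
  by apply: subset_itv; rewrite bnd_simp.
have sub1oo : (`]1, +oo[ : set RT) `<=` `]0, +oo[.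
  by apply: subset_itv; rewrite bnd_simp.
have sub1oo0 : (`]1, +oo[ : set RT) `<=` `[0, +oo[.
  by apply: subset_itv; rewrite bnd_simp.
split=> //; apply: integrable_itv_gt0_split.
- apply: (integrable_powR_dominated_oc01 (M := M0) a0) => [|x /[dup] x01 /andP[x0 _]].
    exact: measurable_fun_continuous_gt0.
  by rewrite ger0_norm ?f01 ?f_ge0.
- apply: (integrable_expRN_dominated (M := M1) _ sub1oo0 c0) => [||x].
  + exact: measurable_itv.
  + exact: measurable_fun_continuous_gt0.
  + rewrite /= in_itv/= andbT => x1.
    by rewrite ger0_norm ?f1oo ?f_ge0 ?(lt_trans ltr01 x1).
- apply: (integrable_powR_dominated_oc01 (M := M0) a0) => [|x /[dup] x01 /andP[x0 x1]].
    exact: measurable_fun_continuous_gt0.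
  rewrite ger0_norm ?mulr_ge0 ?f_ge0 ?(ltW x0) // (le_trans _ (f01 _ x01)) //.
  by rewrite ler_piMl ?f_ge0.
- have c2 : 0 < c / 2 by rewrite divr_gt0.
  apply: (integrable_expRN_dominated (M := M1 * (c / 2)^-1) _ sub1oo0 c2) => [||x].
  + exact: measurable_itv.
  + exact: measurable_fun_continuous_gt0.
  + rewrite /= in_itv/= andbT => x1; have x0 := lt_trans ltr01 x1.
    have fle := f1oo x x1; have M1_ge0 : 0 <= M1.
      by rewrite -(pmulr_lge0 _ (expR_gt0 (- (c * x)))) (le_trans (f_ge0 _ x0)).
    rewrite ger0_norm ?mulr_ge0 ?f_ge0 ?(ltW x0) // -mulrA.
    apply: le_trans (ler_wpM2l (ltW x0) fle) _.
    by rewrite mulrCA ler_wpM2l ?mul_expRN_le.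
Qed.

Lemma Rintegral_pos_gt0 (f : R -> R) :
  (forall x, 0 < x -> 0 < f x) -> (forall x, 0 < x -> {for x, continuous f}) ->
  integrable f -> 0 < \int[mu]_(x in pos) f x.
Proof.
move=> f_gt0 cf fi; apply: (Rintegral_gt0 (a := 1) (b := 2)) => //.
- by apply: subset_itv; rewrite bnd_simp ?ltr01.
- by rewrite ltr1n.
- by move=> x; rewrite /= in_itv/= andbT => /f_gt0/ltW.
- by move=> x /andP[x1 _]; apply/cf/(lt_le_trans ltr01 x1).
- by move=> x /andP[x1 _]; apply/f_gt0/(lt_le_trans ltr01 x1).
Qed.

Lemma mean_prop_density_gt0 (f : R -> R) :
  regular_density f -> 0 < mean_prop_density f.
Proof.
case=> f_gt0 cf fi xfi; rewrite mean_prop_densityE divr_gt0 ?Rintegral_pos_gt0 //.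
- by move=> x x0; rewrite mulr_gt0 ?f_gt0.
- by move=> x x0; apply: continuousM; [exact: cvg_id | exact: cf].
Qed.

Lemma integrable_scale (f : R -> R) (k : R) :
  integrable f -> integrable (fun x => k * f x).
Proof.
move=> fi; apply: eq_integrable (integrableZl measurable_pos k fi) => [|x _ /=].
  exact: measurable_pos.
by rewrite EFinM.
Qed.

Lemma integrable_sub (f g : R -> R) :
  integrable f -> integrable g -> integrable (fun x => f x - g x).
Proof.
move=> fi gi; apply: eq_integrable (integrableB measurable_pos fi gi) => [|x _ /=].
  exact: measurable_pos.
by rewrite EFinB.
Qed.

Lemma integrable_centered (f : R -> R) (m : R) :
  integrable f -> integrable (fun x => x * f x) ->
  integrable (fun x => (x - m) * f x).
Proof.
move=> fi xfi; have := integrable_sub xfi (integrable_scale m fi).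
by apply: eq_integrable => [|x _ /=]; rewrite ?measurable_pos ?mulrBl.
Qed.

Lemma Rintegral_centered (f : R -> R) (m : R) :
  integrable f -> integrable (fun x => x * f x) ->
  \int[mu]_(x in pos) ((x - m) * f x) =
  \int[mu]_(x in pos) (x * f x) - m * \int[mu]_(x in pos) f x.
Proof.
move=> fi xfi; rewrite -RintegralZl ?measurable_pos //.
rewrite -RintegralB ?measurable_pos ?integrable_scale //.
by apply: eq_Rintegral => x _; rewrite mulrBl.
Qed.

Lemma Rintegral_tilt_covariance_gt0 (f g h : R -> R) (m : R) : 0 < m ->
  regular_density f -> regular_density g ->
  (forall x, 0 < x -> g x = h x * f x) ->
  (forall x y, 0 < x -> x < y -> h x < h y) ->
  0 < \int[mu]_(x in pos) ((x - m) * g x - h m * ((x - m) * f x)).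
Proof.
move=> m0 [f_gt0 cf fi xfi] [g_gt0 cg gi xgi] gE h_incr.
have m1_gt0 : 0 < m + 1 by rewrite addr_gt0.
have covE x : 0 < x ->
    (x - m) * g x - h m * ((x - m) * f x) = (x - m) * (h x - h m) * f x.
  by move=> x0; rewrite gE //; ring.
apply: (Rintegral_gt0 (a := m + 1) (b := m + 2)).
- exact: measurable_pos.
- by apply: subset_itv; rewrite bnd_simp.
- by rewrite ltrD2l ltr1n.
- by apply: integrable_sub; [|apply: integrable_scale]; apply: integrable_centered.
- move=> x; rewrite /= in_itv/= andbT => x0.
  rewrite covE // mulr_ge0 ?(ltW (f_gt0 _ _)) //.
  have [xm|mx] := leP x m; last by rewrite mulr_ge0 // subr_ge0 ltW // h_incr.
  rewrite mulr_le0 ?subr_le0 //; move: xm; rewrite le_eqVlt => /predU1P[-> //|xm].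
  exact/ltW/h_incr.
- move=> x /andP[mx _]; have x0 : 0 < x := lt_le_trans m1_gt0 mx.
  have cxm : {for x, continuous (fun y : R => y - m)}.
    by apply: continuousB; [exact: cvg_id | exact: cst_continuous].
  apply: continuousB; apply: continuousM; do ?exact: cst_continuous.
  + exact: cxm.
  + exact: cg.
  + by apply: continuousM; [exact: cxm | exact: cf].
- move=> x /andP[mx _]; have mx' : m < x by apply: lt_le_trans mx; rewrite ltrDl.
  have x0 := lt_trans m0 mx'.
  by rewrite covE // !mulr_gt0 ?subr_gt0 ?h_incr ?f_gt0.
Qed.

Lemma mean_prop_density_lt_tilt (f g h : R -> R) :
  regular_density f -> regular_density g ->
  (forall x, 0 < x -> g x = h x * f x) ->
  (forall x y, 0 < x -> x < y -> h x < h y) ->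
  mean_prop_density f < mean_prop_density g.
Proof.
move=> rf rg gE h_incr; have m0 := mean_prop_density_gt0 rf.
have := Rintegral_tilt_covariance_gt0 m0 rf rg gE h_incr.
case: rf => f_gt0 cf fi xfi; case: rg => g_gt0 cg gi xgi.
set m := mean_prop_density f.
have centered_f : \int[mu]_(x in pos) ((x - m) * f x) = 0.
  rewrite Rintegral_centered // /m mean_prop_densityE divfK ?subrr //.
  by rewrite gt_eqF ?Rintegral_pos_gt0.
rewrite RintegralB ?measurable_pos ?integrable_scale ?integrable_centered //.
rewrite RintegralZl ?measurable_pos ?integrable_centered //.
rewrite centered_f mulr0 subr0 Rintegral_centered // subr_gt0 => ineq.
by rewrite [X in _ < X]mean_prop_densityE ltr_pdivlMr // Rintegral_pos_gt0.
Qed.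

End PositiveHalfLine.

Section GibbsUpdate.
Context {R : realType}.

Lemma continuous_gamma_dens (k l x : R) : 0 < x -> {for x, continuous (gamma_dens k l)}.
Proof.
move=> x0; apply: continuousM; first exact: continuous_powRl.
apply: (continuous_expR_comp (s := fun y => - ((l ^+ 2 + k * y ^+ 2) / (2 * y)))).
apply: continuousN; apply: continuousM.
  apply: continuousD; first exact: cst_continuous.
  by apply: continuousM; [exact: cst_continuous | exact: exprn_continuous].
apply: continuousV; first by rewrite mulf_neq0 ?gt_eqF.
by apply: continuousM; [exact: cst_continuous | exact: cvg_id].
Qed.

Lemma continuous_kappa_dens (c x : R) : {for x, continuous (kappa_dens c)}.
Proof.
apply: continuousM; first exact: cvg_id.
apply: (continuous_expR_comp (s := fun y => - (c * y / 2))).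
apply: continuousN; apply: continuousM; last exact: cst_continuous.
by apply: continuousM; [exact: cst_continuous | exact: cvg_id].
Qed.

Lemma gamma_dens_normr (k l : R) : gamma_dens k `|l| = gamma_dens k l.
Proof. by rewrite /gamma_dens real_normK ?num_real. Qed.

Section gamma.
Variable k : R.
Hypothesis k0 : 0 < k.

Lemma gamma_dens_gt0 (l x : R) : 0 < x -> 0 < gamma_dens k l x.
Proof. by move=> x0; rewrite /gamma_dens mulr_gt0 ?powR_gt0 ?expR_gt0. Qed.

Lemma gamma_dens_le (l x : R) : 0 < x ->
  gamma_dens k l x <= powR x (- (1 / 2)) * expR (- (k / 2 * x)).
Proof.
move=> x0; rewrite ler_wpM2l ?powR_ge0 // ler_expR lerN2 -subr_ge0.
have -> : (l ^+ 2 + k * x ^+ 2) / (2 * x) - k / 2 * x = l ^+ 2 / (2 * x).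
  by field; rewrite gt_eqF.
by rewrite divr_ge0 ?sqr_ge0 // mulr_ge0 // ltW.
Qed.

Lemma regular_gamma_dens (l : R) : regular_density (gamma_dens k l).
Proof.
apply: (regular_density_bounded (a := 1 / 2) (c := k / 2) (M0 := 1) (M1 := 1)).
- by rewrite divr_gt0.
- by rewrite divr_gt0.
- exact: gamma_dens_gt0.
- exact: continuous_gamma_dens.
- move=> x /andP[x0 x1]; rewrite mul1r.
  have -> : 1 / 2 - 1 = - (1 / 2) :> R by field.
  apply: (le_trans (gamma_dens_le _ x0)); rewrite ler_piMr ?powR_ge0 //.
  by rewrite expR_le1 oppr_le0 mulr_ge0 ?divr_ge0 ?(ltW k0) ?(ltW x0).
- move=> x x1; have x0 := lt_trans ltr01 x1.
  rewrite mul1r (le_trans (gamma_dens_le _ x0)) //.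
  rewrite ler_piMl ?expR_ge0 // -[leRHS](powRr0 x) ler_powR ?(ltW x1) //.
Qed.

Lemma mean_gamma_gt0 (l : R) : 0 < mean_gamma k l.
Proof. exact/mean_prop_density_gt0/regular_gamma_dens. Qed.

Lemma mean_gamma_lt (x y : R) : 0 <= x -> x < y -> mean_gamma k x < mean_gamma k y.
Proof.
move=> x0 xy; have d0 : 0 < y ^+ 2 - x ^+ 2 by nra.
pose h t := expR (- ((y ^+ 2 - x ^+ 2) / (2 * t))).
apply: (mean_prop_density_lt_tilt (h := h)).
- exact: regular_gamma_dens.
- exact: regular_gamma_dens.
- move=> t t0; rewrite /gamma_dens [RHS]mulrCA -expRD; congr (_ * expR _).
  by field; rewrite gt_eqF.
- move=> s t s0 st; rewrite ltr_expR ltrN2 ltr_pM2l // ltf_pV2 ?posrE ?mulr_gt0 //.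
    by rewrite ltr_pM2l.
  exact: lt_trans st.
Qed.

End gamma.

Lemma regular_kappa_dens (c : R) : 0 < c -> regular_density (kappa_dens c).
Proof.
move=> c0; have c2 : 0 < c / 2 by rewrite divr_gt0.
have kdE x : kappa_dens c x = x * expR (- (c / 2 * x)) by rewrite /kappa_dens mulrAC.
apply: (regular_density_bounded (a := 1) (c := c / 2 / 2) (M0 := 1)
  (M1 := (c / 2 / 2)^-1)) => //; first by rewrite divr_gt0.
- by move=> x x0; rewrite mulr_gt0 ?expR_gt0.
- by move=> x _; exact: continuous_kappa_dens.
- move=> x /andP[x0 x1]; rewrite subrr powRr0 mulr1 kdE.
  rewrite mulr_ile1 ?expR_ge0 ?(ltW x0) //.
  by rewrite expR_le1 oppr_le0 mulr_ge0 ?(ltW c2) ?(ltW x0).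
- by move=> x x1; rewrite kdE mul_expRN_le.
Qed.

Lemma mean_kappa_dens_lt (c c' : R) : 0 < c -> c < c' ->
  mean_prop_density (kappa_dens c') < mean_prop_density (kappa_dens c).
Proof.
move=> c0 cc'; have c'0 := lt_trans c0 cc'.
apply: (mean_prop_density_lt_tilt (h := fun t => expR ((c' - c) * t / 2))).
- exact: regular_kappa_dens.
- exact: regular_kappa_dens.
- move=> t t0; rewrite /kappa_dens [RHS]mulrCA -expRD; congr (_ * expR _).
  by field.
- move=> s t s0 st; rewrite ltr_expR ltr_pM2r ?invr_gt0 // ltr_pM2l //.
  by rewrite subr_gt0.
Qed.

End GibbsUpdate.

Theorem theorem3 (R : realType) (kappa : R) (hk : 0 < kappa) :
  exists rho : R -> R,
    (forall x : R, 0 <= x -> 0 < rho x) /\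
    {in `[0, +oo[ &, {homo rho : x y / x < y >-> y < x}} /\
    (forall lam : R, mean_kappa_new kappa lam = rho `|lam|).
Proof.
exists (mean_kappa_new kappa); split; [|split].
- by move=> x _; apply/mean_prop_density_gt0/regular_kappa_dens/mean_gamma_gt0.
- move=> x y; rewrite !in_itv/= !andbT => x0 _ xy.
  by apply: mean_kappa_dens_lt; [exact: mean_gamma_gt0 | exact: mean_gamma_lt].
- by move=> lam; rewrite /mean_kappa_new /mean_gamma gamma_dens_normr.
Qed.
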